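(* Let $q$ be a prime power with $q\ge 2s$, and let $1\le t_i\le t_o\le s$. Then there exists a linear $(t_i,t_o,s,q)$-AONT.
   Context: A linear $(t_i,t_o,s,q)$-AONT is given by an invertible $s\times s$ matrix $M$ over $\mathbb{F}_q$ defining the map $\mathbf{x}\mapsto\mathbf{y}=\mathbf{x}M^{-1}$ on row vectors of $\mathbb{F}_q^s$, such that for every set $I$ of $t_i$ input coordinates and every set $J$ of $s-t_o$ output coordinates, the pair $((x_i)_{i\in I},(y_j)_{j\in J})$ takes every value in $\mathbb{F}_q^{t_i+s-t_o}$ equally often as $\mathbf{x}$ ranges over $\mathbb{F}_q^s$. Equivalently, $M$ is invertible and every $t_o\times t_i$ submatrix of $M$ has rank $t_i$. *)

From mathcomp Require Import all_boot all_algebra all_field.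
Set Implicit Arguments. Unset Strict Implicit. Unset Printing Implicit Defensive.
Import GRing.Theory.
Local Open Scope ring_scope.

(* A linear (ti,to,s,q)-AONT over the finite field F (q = #|F|):
   M invertible, and the map x |-> y = x M^{-1} on row vectors of F^s is such
   that for every choice of ti input coordinates (given by an injective
   f : 'I_ti -> 'I_s) and s - to output coordinates (injective g), the pair
   ((x_i)_{i in I}, (y_j)_{j in J}) takes every value equally often as x ranges
   over F^s. *)
Definition aont_count (F : finFieldType) (ti to s : nat) (M : 'M[F]_s)
    (f : 'I_ti -> 'I_s) (g : 'I_(s - to) -> 'I_s)
    (a : 'rV[F]_ti) (b : 'rV[F]_(s - to)) : nat :=
  #|[set x : 'rV[F]_s | (colsub f x == a) && (colsub g (x *m invmx M) == b)]|.

Definition linear_AONT (F : finFieldType) (ti to s : nat) (M : 'M[F]_s) : Prop :=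
  M \in unitmx /\
  forall (f : 'I_ti -> 'I_s) (g : 'I_(s - to) -> 'I_s),
    injective f -> injective g ->
    forall a a' b b',
      aont_count M f g a b = aont_count M f g a' b'.

From mathcomp Require Import all_boot all_algebra all_field.
From mathcomp Require Import zify ring.
Set Implicit Arguments. Unset Strict Implicit. Unset Printing Implicit Defensive.
Import GRing.Theory.
Local Open Scope ring_scope.

(* Take for M the Cauchy matrix M_ij = 1 / (x_i - y_j) of 2s distinct field
   elements.  The columns of a Cauchy matrix with at least as many rows as
   columns are independent, since a nonzero combination sum_k c_k / (X - y_k)
   of n columns vanishes at fewer than n points; in particular M is invertible.
   Writing x = z M, the map x |-> (x_I, (x M^-1)_J) becomes z |-> ((z M)_I, z_J),
   whose matrix consists of the columns I of M and the unit vectors indexed by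
   J.  These columns are independent, because on the to >= ti rows outside J
   the columns I of M form a tall Cauchy matrix.  So the map is onto, and a
   linear map onto a finite space has all its fibers of the same size. *)

Lemma partial_fractions_eq0 (F : fieldType) n (w c : 'I_n -> F) (zs : seq F) :
  injective w -> uniq zs -> (n <= size zs)%N ->
  (forall z k, z \in zs -> z != w k) ->
  (forall z, z \in zs -> \sum_k c k / (z - w k) = 0) -> forall k, c k = 0.
Proof.
move=> w_inj zs_uniq n_le_zs zs_w zs_root.
pose Q k := \prod_(l | l != k) ('X - (w l)%:P).
pose P := \sum_k c k *: Q k.
have size_Q k : (size (Q k) <= n)%N.
  rewrite size_prod => [|l _]; last by rewrite polyXsubC_eq0.
  under eq_bigr do rewrite size_XsubC.
  by rewrite sum_nat_const cardC1 card_ord; have := ltn_ord k; lia.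
have size_P : (size P <= n)%N.
  apply: leq_trans (size_sum _ _ _) _; apply/bigmax_leqP => k _.
  exact: leq_trans (size_scale_leq _ _) (size_Q k).
have P_zs : all (root P) zs.
  apply/allP => z z_zs; apply/eqP.
  suff -> : P.[z] = (\prod_l (z - w l)) * \sum_k c k / (z - w k).
    by rewrite zs_root ?mulr0.
  rewrite horner_sum mulr_sumr; apply: eq_bigr => k _.
  rewrite hornerZ horner_prod [in RHS](bigD1 k) //=.
  under eq_bigr do rewrite hornerXsubC.
  have zw_neq0 : z - w k != 0 by rewrite subr_eq0 zs_w.
  by field.
have P0 : P = 0.
  apply: contraTeq n_le_zs => P_neq0.
  by rewrite -ltnNge (leq_trans (max_poly_roots P_neq0 P_zs zs_uniq)).
move=> k; have : P.[w k] = 0 by rewrite P0 horner0.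
have Q_wk l : l != k -> (Q l).[w k] = 0.
  move=> lk; rewrite horner_prod (bigD1 k) 1?eq_sym //=.
  by rewrite hornerXsubC subrr mul0r.
rewrite horner_sum (bigD1 k) //= big1 => [|l lk]; last by rewrite hornerZ Q_wk ?mulr0.
rewrite addr0 hornerZ => /eqP; rewrite mulf_eq0 => /predU1P[//|].
rewrite horner_prod => /prodf_eq0[l lk].
by rewrite hornerXsubC subr_eq0 => /eqP/w_inj lk_eq; rewrite lk_eq eqxx in lk.
Qed.

Lemma row_free_rowsub1 (F : fieldType) m l (g : 'I_l -> 'I_m) :
  injective g -> row_free (rowsub g (1%:M : 'M[F]_m)).
Proof.
move=> g_inj; apply/row_freeP; exists (colsub g 1%:M).
by rewrite mul_rowsub_mx mul1mx; apply/matrixP => i j; rewrite !mxE (inj_eq g_inj).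
Qed.

Section CauchyMatrix.

Variables (F : fieldType) (m n : nat) (x : 'I_m -> F) (y : 'I_n -> F).
Hypotheses (x_inj : injective x) (y_inj : injective y).
Hypothesis x_neq_y : forall i j, x i != y j.

Definition cauchy_mx : 'M[F]_(m, n) := \matrix_(i, j) (x i - y j)^-1.

Lemma cauchy_mx_tr_ker (A : {set 'I_m}) (u : 'rV[F]_n) :
  (n <= #|A|)%N -> (forall i, i \in A -> (u *m cauchy_mx^T) 0 i = 0) -> u = 0.
Proof.
move=> n_le_A uA; apply/rowP => k; rewrite mxE.
apply: (@partial_fractions_eq0 _ _ y (fun k => u 0 k) [seq x i | i in A]) => //.
- by rewrite map_inj_uniq ?enum_uniq.
- by rewrite size_image.
- by move=> _ j /imageP[i _ ->].
move=> _ /imageP[i iA ->]; rewrite -[RHS](uA i iA) mxE.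
by apply: eq_bigr => j _; rewrite !mxE.
Qed.

Lemma cauchy_mx_tr_row_free : (n <= m)%N -> row_free cauchy_mx^T.
Proof.
move=> n_le_m; apply/inj_row_free => u uC.
by apply: (@cauchy_mx_tr_ker setT) => [|i _]; rewrite ?cardsT ?card_ord ?uC ?mxE.
Qed.

Lemma row_full_cauchy_mx_unit_cols l (g : 'I_l -> 'I_m) :
  injective g -> (n + l <= m)%N -> row_full (row_mx cauchy_mx (colsub g 1%:M)).
Proof.
move=> g_inj nl_le_m; rewrite /row_full -mxrank_tr; apply/inj_row_free => u.
rewrite -[u]hsubmxK tr_row_mx trmx_mxsub trmx1 mul_row_col => uP.
have u1_0 : lsubmx u = 0.
  apply: (@cauchy_mx_tr_ker (~: (g @: setT))) => [|i].
    by rewrite cardsCs setCK card_imset // cardsT !card_ord; lia.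
  rewrite inE => i_notin_g; have := congr1 (fun v : 'rV_m => v 0 i) uP.
  rewrite !mxE [X in _ + X]big1 ?addr0 // => k _; rewrite !mxE.
  have [gk_i|] := eqVneq (g k) i; last by rewrite mulr0.
  by rewrite -gk_i imset_f in i_notin_g.
have u2_0 : rsubmx u = 0.
  apply/eqP; rewrite -(mulmx_free_eq0 _ (row_free_rowsub1 F g_inj)).
  by move: uP; rewrite u1_0 mul0mx add0r => ->.
by rewrite u1_0 u2_0 row_mx0.
Qed.

End CauchyMatrix.

Lemma cauchy_mx_unit (F : fieldType) n (x y : 'I_n -> F) :
  injective x -> injective y -> (forall i j, x i != y j) ->
  cauchy_mx x y \in unitmx.
Proof. by move=> *; rewrite -unitmx_tr -row_free_unit cauchy_mx_tr_row_free. Qed.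

Lemma card_mulmx_fiber (F : finFieldType) m n (N : 'M[F]_(m, n)) (t : 'rV_n) :
  row_full N -> #|[set z : 'rV_m | z *m N == t]| = #|[set z : 'rV_m | z *m N == 0]|.
Proof.
move=> N_full; have /submxP[z0 ->] := submx_full t N_full.
rewrite -[LHS](card_preimset _ (addIr z0)); apply: eq_card => z.
by rewrite !inE mulmxDl -subr_eq0 addrK.
Qed.

Lemma disjoint_injections_exist (T : finType) m n : (m + n <= #|T|)%N ->
  exists (x : 'I_m -> T) (y : 'I_n -> T),
    [/\ injective x, injective y & forall i j, x i != y j].
Proof.
move=> mn_le_T; pose e := @enum_val T T \o widen_ord mn_le_T.
have e_inj : injective e by move=> i j /enum_val_inj/(congr1 val)/=/ord_inj.
exists (e \o lshift n), (e \o @rshift m n); split.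
- by move=> i j /e_inj/lshift_inj.
- by move=> i j /e_inj/rshift_inj.
- by move=> i j; rewrite (inj_eq e_inj) eq_lrshift.
Qed.

Theorem mainTheorem10 (F : finFieldType) (s ti to : nat) :
  (2 * s <= #|F|)%N -> (1 <= ti)%N -> (ti <= to)%N -> (to <= s)%N ->
  exists M : 'M[F]_s, linear_AONT ti to M.
Proof.
(* The construction does not need [1 <= ti]. *)
move=> s2_le_F _ ti_le_to to_le_s.
have [x [y [x_inj y_inj x_neq_y]]] : exists (x y : 'I_s -> F),
    [/\ injective x, injective y & forall i j, x i != y j].
  by apply: disjoint_injections_exist; rewrite addnn -mul2n.
have M_unit : cauchy_mx x y \in unitmx by exact: cauchy_mx_unit.
exists (cauchy_mx x y); split=> // f g f_inj g_inj a a' b b'.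
pose N := row_mx (colsub f 1%:M) (colsub g (invmx (cauchy_mx x y))).
have count_fiber c d : aont_count (cauchy_mx x y) f g c d =
    #|[set z : 'rV_s | z *m N == row_mx c d]|.
  apply: eq_card => z; rewrite !inE mul_mx_row !mulmx_colsub mulmx1.
  by apply/andP/eqP => [[/eqP-> /eqP->] | /eq_row_mx[-> ->]].
have N_full : row_full N.
  have MN : cauchy_mx x y *m N = row_mx (cauchy_mx x (y \o f)) (colsub g 1%:M).
    rewrite mul_mx_row !mulmx_colsub mulmx1 mulmxV //; congr row_mx.
    by apply/matrixP => i k; rewrite !mxE.
  rewrite /row_full -(eqmxMfull N (_ : row_full (cauchy_mx x y))) ?row_full_unit //.
  rewrite MN; apply: row_full_cauchy_mx_unit_cols => //; last by lia.
  - exact: inj_comp.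
  - by move=> i k; apply: x_neq_y.
by rewrite !count_fiber !card_mulmx_fiber.
Qed.
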